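(* Let $A$ be a commutative $\mathbb C$-algebra, $q\in\mathbb C\setminus\{0\}$, $k$ a positive integer and $n$ a positive integer. Let $g\in A$ and $\mathfrak e_i,\mathfrak h_i,\mathfrak p_i\in A$ ($0\le i\le n$) satisfy $\mathfrak e_0=\mathfrak h_0=1$, $\mathfrak p_0=q^{1-k}\bigl(1+(k-1)_q\bigr)$, and for every $1\le m\le n$ $$\sum_{i=0}^{m-1}(-q)^i\mathfrak e_i\mathfrak p_{m-i}=(-1)^{m-1}m_q\,\mathfrak e_m+(-1)^mq\sum_{i=1}^{\lfloor m/2\rfloor}\bigl(q^{m-2i-k}-q^{-m+2i}\bigr)\mathfrak e_{m-2i}g^i,$$ $$\sum_{i=0}^{m-1}q^{-i}\mathfrak h_i\mathfrak p_{m-i}=m_q\,\mathfrak h_m+\sum_{i=1}^{\lfloor m/2\rfloor}\bigl(q^{m-2i-1}+q^{-m+2i+1-k}\bigr)\mathfrak h_{m-2i}g^i,$$ and for every $0\le m\le n$: $\sum_{i=0}^m(-1)^i\mathfrak e_i\mathfrak h_{m-i}=\delta_{m,0}-\delta_{m,2}\,g$. Define $\mathfrak e'_i,\mathfrak h'_i$ by $\mathfrak e'_i=\mathfrak h'_i=0$ for $i<0$ and $\mathfrak e'_i=\mathfrak e_i+\mathfrak e'_{i-2}g$, $\mathfrak h'_i=\mathfrak h_i+\mathfrak h'_{i-2}g$ for $i\ge0$; define $\mathfrak p'_0=q^{-k}k_q$, $\mathfrak p'_1=\mathfrak p_1$, $\mathfrak p'_i=\mathfrak p_i+(q^2\mathfrak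 p'_{i-2}-\mathfrak p_{i-2})g$ ($i\ge2$); and $\mathfrak p''_0=q^{2-k}(k-2)_q$, $\mathfrak p''_1=\mathfrak p_1$, $\mathfrak p''_i=\mathfrak p_i+(q^{-2}\mathfrak p''_{i-2}-\mathfrak p_{i-2})g$ ($i\ge2$). Then for all $1\le m\le n$ $$\sum_{i=0}^{m-1}(-q)^i\mathfrak e_i\mathfrak p'_{m-i}=(-1)^{m-1}m_q\,\mathfrak e_m,\qquad \sum_{i=0}^{m-1}q^{-i}\mathfrak h_i\mathfrak p''_{m-i}=m_q\,\mathfrak h_m,$$ and for all $0\le m\le n$ $$\sum_{i=0}^m(-1)^i\mathfrak e'_i\mathfrak h_{m-i}=\delta_{m,0}=\sum_{i=0}^m(-1)^i\mathfrak e_i\mathfrak h'_{m-i}.$$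
   Context: For an integer $m\ge0$, $m_q:=q^{m-1}+q^{m-3}+\dots+q^{1-m}$ (so $m_q=(q^m-q^{-m})/(q-q^{-1})$ when $q^2\ne1$, and $0_q=0$); for negative $m$, $m_q:=-(-m)_q$. $\delta_{a,b}$ is the Kronecker symbol. *)

From HB Require Import structures.
From mathcomp Require Import all_boot all_order all_algebra.
From mathcomp Require Import complex.
From mathcomp Require Export reals.
Set Implicit Arguments. Unset Strict Implicit. Unset Printing Implicit Defensive.
Import Order.TTheory GRing.Theory Num.Theory.
Local Open Scope ring_scope.

Definition qnat {F : unitRingType} (q : F) (m : nat) : F :=
  \sum_(j < m) q ^ (m%:Z - 1 - (2 * j)%:Z).

(* m_q for m : int, with m_q = -(-m)_q for negative m. *)
Definition qint {F : unitRingType} (q : F) (z : int) : F :=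
  match z with
  | Posz m => qnat q m
  | Negz m => - qnat q m.+1
  end.

Section Primes.
Variables (F : fieldType) (A : comAlgType F).

Fixpoint xprime (x : nat -> A) (g : A) (i : nat) : A :=
  match i with
  | 0 => x 0
  | 1 => x 1
  | j.+2 => x j.+2 + xprime x g j * g
  end.

Fixpoint pmod (c0 c : F) (p : nat -> A) (g : A) (i : nat) : A :=
  match i with
  | 0 => c0%:A
  | 1 => p 1
  | j.+2 => p j.+2 + (c *: pmod c0 c p g j - p j) * g
  end.
End Primes.

From HB Require Import structures.
From mathcomp Require Import all_boot all_order all_algebra.
From mathcomp Require Import complex.
From mathcomp Require Import reals.
From mathcomp Require Import ring zify.

(* Convolving against a primed sequence satisfies a two-step recursion: at
   m + 2 it is the unprimed convolution plus g times the primed one at m.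
   Along this recursion the g-correction terms of the hypotheses telescope, up
   to a single boundary multiple of e_m g (resp. h_m g) whose coefficient
   vanishes by the q-number identity (q^2 - 1) m_q = q^(m+1) - q^(1-m).  For
   the orthogonality relations, the defect -delta_{m,2} g is exactly what the
   recursion feeds back from delta_{0,0}. *)
Set Implicit Arguments. Unset Strict Implicit. Unset Printing Implicit Defensive.
Import Order.TTheory GRing.Theory Num.Theory.
Local Open Scope ring_scope.

Section QNumbers.
Variables (F : fieldType) (q : F).

(* The coefficients of e_(m-2i) g^i and h_(m-2i) g^i in the hypotheses. *)
Definition ecoef (k m i : nat) : F :=
  (-1) ^+ m * q * (q ^ (m%:Z - (2 * i)%:Z - k%:Z) - q ^ (- m%:Z + (2 * i)%:Z)).

Definition hcoef (k m i : nat) : F :=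
  q ^ (m%:Z - (2 * i)%:Z - 1) + q ^ (- m%:Z + (2 * i)%:Z + 1 - k%:Z).

Lemma ecoefSS k m i : ecoef k m.+2 i.+1 = ecoef k m i.
Proof. by rewrite /ecoef !exprS !mulN1r opprK; congr (_ * (q ^ _ - q ^ _)); lia. Qed.

Lemma hcoefSS k m i : hcoef k m.+2 i.+1 = hcoef k m i.
Proof. by rewrite /hcoef; congr (q ^ _ + q ^ _); lia. Qed.

Hypothesis q_neq0 : q != 0.

Lemma qnat0 : qnat q 0 = 0.
Proof. by rewrite /qnat big_ord0. Qed.

Lemma qnatS m : qnat q m.+1 = q ^+ m + qnat q m / q.
Proof.
rewrite /qnat big_ord_recl big_distrl /=.
have -> : m.+1%:Z - 1 - (2 * 0)%:Z = m by lia.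
rewrite -exprnP; congr (_ + _); apply: eq_bigr => j _.
have -> : m.+1%:Z - 1 - (2 * bump 0 j)%:Z = m%:Z - 1 - (2 * j)%:Z - 1.
  by rewrite /bump /=; lia.
by rewrite expfzDr // exprN1.
Qed.

Lemma qintBn1 k : qint q (k%:Z - 1) = q * qnat q k - q ^+ k.
Proof.
case: k => [|k]; first by rewrite /= qnatS qnat0; ring.
have -> : k.+1%:Z - 1 = k by lia.
by rewrite /= qnatS exprS; field.
Qed.

Lemma q2B1_qnat m : (q ^+ 2 - 1) * qnat q m = q ^+ m.+1 - q / q ^+ m.
Proof.
elim: m => [|m IHm]; first by rewrite qnat0 invr1; ring.
have -> : (q ^+ 2 - 1) * qnat q m.+1 = (q ^+ 2 - 1) * q ^+ m + (q ^+ 2 - 1) * qnat q m / q.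
  by rewrite qnatS; ring.
by rewrite IHm !exprS; field; rewrite expf_neq0.
Qed.

Lemma expfz_natB a b : q ^ (a%:Z - b%:Z) = q ^+ a / q ^+ b.
Proof. by rewrite expfzDr // -exprnN -exprnP. Qed.

Lemma signB1_qnat m : (-1) ^+ m.-1 * qnat q m = - ((-1) ^+ m * qnat q m).
Proof. by case: m => [|m]; rewrite ?qnat0 ?mulr0 ?oppr0 // exprS mulN1r mulNr opprK. Qed.

Lemma ecoef_cancel k m :
  ecoef k m.+2 1 + (q ^+ 2 - 1) * ((-1) ^+ m.-1 * qnat q m)
  + (- q) ^+ m * (q ^+ 2 * (q ^ (- k%:Z) * qint q k) - q ^ (1 - k%:Z) * (1 + qint q (k%:Z - 1)))
  = 0.
Proof.
rewrite /ecoef signB1_qnat mulrN mulrCA q2B1_qnat qintBn1 /=.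
have -> : m.+2%:Z - (2 * 1)%:Z - k%:Z = m%:Z - k%:Z by lia.
have -> : - m.+2%:Z + (2 * 1)%:Z = - m%:Z by lia.
rewrite (_ : 1 - k%:Z = 1%N%:Z - k%:Z) // !expfz_natB -!exprnN (exprNn q) !exprS.
by field; rewrite ?expf_neq0 ?q_neq0.
Qed.

Lemma hcoef_cancel k m : (0 < k)%N ->
  hcoef k m.+2 1 + (q ^ (-2) - 1) * qnat q m
  + q ^ (- m%:Z) * (q ^ (-2) * (q ^ (2 - k%:Z) * qint q (k%:Z - 2))
                    - q ^ (1 - k%:Z) * (1 + qint q (k%:Z - 1)))
  = 0.
Proof.
case: k => // k _.
have -> : k.+1%:Z - 2 = k%:Z - 1 by lia.
have -> : (q ^ (-2) - 1) * qnat q m = - ((q ^+ 2 - 1) * qnat q m) / q ^+ 2.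
  by rewrite -exprnN; field; rewrite ?expf_neq0.
rewrite /hcoef q2B1_qnat qintBn1 /=.
have -> : m.+2%:Z - (2 * 1)%:Z - 1 = m%:Z - 1%N%:Z by lia.
have -> : - m.+2%:Z + (2 * 1)%:Z + 1 - k.+1%:Z = 1%N%:Z - (m + k.+1)%N%:Z by lia.
rewrite (_ : 2 - k.+1%:Z = 2%N%:Z - k.+1%:Z) // (_ : 1 - k.+1%:Z = 1%N%:Z - k.+1%:Z) //.
rewrite !expfz_natB -!exprnN exprD !exprS subSS subn0.
by field; rewrite ?expf_neq0 ?q_neq0.
Qed.

End QNumbers.

Section Corrections.
Variables (F : fieldType) (A : comAlgType F).

Definition gcorrection (f : nat -> nat -> F) (x : nat -> A) (g : A) (m : nat) : A :=
  \sum_(1 <= i < (m./2).+1) f m i *: (x (m - 2 * i)%N * g ^+ i).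

(* Exposes the ring morphism [in_alg], through which [ring] handles scalars. *)
Lemma scale_in_alg (a : F) (x : A) : a *: x = GRing.in_alg A a * x.
Proof. by rewrite mulr_algl. Qed.

Lemma gcorrection_small f x g m : (m < 2)%N -> gcorrection f x g m = 0.
Proof. by case: m => [|[|]] // _; rewrite /gcorrection big_geq. Qed.

Lemma gcorrectionSS f x g m : (forall i, f m.+2 i.+1 = f m i) ->
  gcorrection f x g m.+2 = f m.+2 1%N *: (x m * g) + gcorrection f x g m * g.
Proof.
move=> fS; rewrite /gcorrection /= big_nat_recl // mulr_suml subn2 /= expr1.
congr (_ + _); apply: eq_bigr => i _.
rewrite fS -scalerAl exprSr mulrA; congr (_ *: (x _ * _ * _)); lia.
Qed.

Lemma sum_pmodSS (w : nat -> F) c0 c (e p : nat -> A) g m :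
  \sum_(i < m.+2) (w i *: (e i * pmod c0 c p g (m.+2 - i)%N))
  = \sum_(i < m.+2) (w i *: (e i * p (m.+2 - i)%N))
    + (c *: \sum_(i < m) (w i *: (e i * pmod c0 c p g (m - i)%N))
       - \sum_(i < m) (w i *: (e i * p (m - i)%N))
       + w m *: (e m * (c *: c0%:A - p 0))) * g.
Proof.
rewrite big_ord_recr [X in _ = X + _]big_ord_recr /= subSn // subnn /=.
have subSS_ord (i : 'I_m.+1) : (m.+2 - i = (m - i).+2)%N by have := ltn_ord i; lia.
under eq_bigr => i _ do rewrite subSS_ord /= mulrDr scalerDr.
under [X in _ = X + _ + _]eq_bigr => i _ do rewrite subSS_ord.
rewrite big_split /= [X in _ + X + _ = _]big_ord_recr /= subnn.
have -> : \sum_(i < m) w i *: (e i * ((c *: pmod c0 c p g (m - i)%N - p (m - i)%N) * g))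
  = (c *: \sum_(i < m) (w i *: (e i * pmod c0 c p g (m - i)%N))
       - \sum_(i < m) (w i *: (e i * p (m - i)%N))) * g.
  rewrite scaler_sumr -sumrB mulr_suml; apply: eq_bigr => i _.
  by rewrite !scale_in_alg; ring.
by rewrite !scale_in_alg; ring.
Qed.

Lemma sum_pmod_corrected (w a : nat -> F) (f : nat -> nat -> F) (c0 c p0 : F)
    (e p : nat -> A) (g : A) (n : nat) :
  p 0%N = p0%:A -> a 0%N = 0 ->
  (forall m i, f m.+2 i.+1 = f m i) ->
  (forall m, f m.+2 1%N + (c - 1) * a m + w m * (c * c0 - p0) = 0) ->
  (forall m, (1 <= m <= n)%N ->
     \sum_(i < m) (w i *: (e i * p (m - i)%N)) = a m *: e m + gcorrection f e g m) ->
  forall m, (m <= n)%N ->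
    \sum_(i < m) (w i *: (e i * pmod c0 c p g (m - i)%N)) = a m *: e m.
Proof.
move=> p0E a0 fS coefE sumE.
have sumE0 m : (m <= n)%N ->
    \sum_(i < m) (w i *: (e i * p (m - i)%N)) = a m *: e m + gcorrection f e g m.
  case: m => [_|m Hm]; last exact: sumE.
  by rewrite big_ord0 a0 scale0r gcorrection_small ?addr0.
elim/ltn_ind=> m IHm Hm; case: m IHm Hm => [|[|m]] IHm Hm.
- by rewrite big_ord0 a0 scale0r.
- by have := sumE0 1%N Hm; rewrite !big_ord1 gcorrection_small // addr0.
have Hmn : (m <= n)%N by lia.
rewrite sum_pmodSS sumE0 // IHm // sumE0 //.
rewrite gcorrectionSS // p0E; apply/eqP; rewrite -subr_eq0; apply/eqP.
rewrite -(scale0r (e m * g)) -(coefE m) !scale_in_alg; ring.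
Qed.

End Corrections.

Section Orthogonality.
Variables (F : fieldType) (A : comAlgType F) (g : A).

Lemma xprime_conv_l (e h : nat -> A) m :
  \sum_(i < m.+3) ((-1) ^+ i * xprime e g i * h (m.+2 - i)%N)
  = \sum_(i < m.+3) ((-1) ^+ i * e i * h (m.+2 - i)%N)
    + (\sum_(i < m.+1) ((-1) ^+ i * xprime e g i * h (m - i)%N)) * g.
Proof.
rewrite mulr_suml [in LHS]big_ord_recl [in LHS]big_ord_recl.
rewrite [X in _ = X + _]big_ord_recl [X in _ = _ + X + _]big_ord_recl /=.
rewrite -!addrA; congr (_ + (_ + _)).
rewrite -big_split /=; apply: eq_bigr => i _.
by rewrite /bump /= !add0n !add1n subSS !exprS; ring.
Qed.

Lemma xprime_conv_r (e h : nat -> A) m :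
  \sum_(i < m.+3) ((-1) ^+ i * e i * xprime h g (m.+2 - i)%N)
  = \sum_(i < m.+3) ((-1) ^+ i * e i * h (m.+2 - i)%N)
    + (\sum_(i < m.+1) ((-1) ^+ i * e i * xprime h g (m - i)%N)) * g.
Proof.
rewrite mulr_suml [in LHS]big_ord_recr [in LHS]big_ord_recr.
rewrite [X in _ = X + _]big_ord_recr [X in _ = X + _ + _]big_ord_recr /=.
rewrite subnn subSn // subnn.
have -> : \sum_(i < m.+1) (-1) ^+ i * e i * xprime h g (m.+2 - i)%N
  = \sum_(i < m.+1) (-1) ^+ i * e i * h (m.+2 - i)%N
    + \sum_(i < m.+1) (-1) ^+ i * e i * xprime h g (m - i)%N * g.
  rewrite -big_split /=; apply: eq_bigr => i _.
  have -> : (m.+2 - i = (m - i).+2)%N by have := ltn_ord i; lia.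
  by rewrite /=; ring.
by rewrite /=; ring.
Qed.

Lemma delta_of_recursion (S T : nat -> A) n :
  (forall m, (m <= n)%N -> T m = (m == 0%N)%:R - (m == 2%N)%:R * g) ->
  S 0%N = T 0%N -> S 1%N = T 1%N ->
  (forall m, (m.+2 <= n)%N -> S m.+2 = T m.+2 + S m * g) ->
  forall m, (m <= n)%N -> S m = (m == 0%N)%:R.
Proof.
move=> TE S0 S1 SS; elim/ltn_ind=> m IHm Hm.
case: m IHm Hm => [|[|m]] IHm Hm.
- by rewrite S0 TE // mul0r subr0.
- by rewrite S1 TE // mul0r subr0.
rewrite SS // TE // IHm ?(leq_trans (leqnSn m) (ltnW Hm)) //.
by case: m {IHm Hm} => [|m] /=; rewrite ?mul1r ?mul0r; ring.
Qed.

End Orthogonality.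

Theorem lemma6p5 (R : realType) (A : comAlgType (complex R))
    (q : complex R) (k n : nat) (g : A) (e h p : nat -> A) :
  q != 0 -> (0 < k)%N -> (0 < n)%N ->
  e 0%N = 1 -> h 0%N = 1 ->
  p 0%N = (q ^ (1 - k%:Z) * (1 + qint q (k%:Z - 1)))%:A ->
  (forall m : nat, (1 <= m <= n)%N ->
     \sum_(i < m) ((- q) ^+ i *: (e i * p (m - i)%N))
     = (-1) ^+ m.-1 *: (qnat q m *: e m)
       + (-1) ^+ m *: (q *: \sum_(1 <= i < (m./2).+1)
            ((q ^ (m%:Z - (2 * i)%:Z - k%:Z) - q ^ (- m%:Z + (2 * i)%:Z))
               *: (e (m - 2 * i)%N * g ^+ i)))) ->
  (forall m : nat, (1 <= m <= n)%N ->
     \sum_(i < m) (q ^ (- i%:Z) *: (h i * p (m - i)%N))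
     = qnat q m *: h m
       + \sum_(1 <= i < (m./2).+1)
            ((q ^ (m%:Z - (2 * i)%:Z - 1) + q ^ (- m%:Z + (2 * i)%:Z + 1 - k%:Z))
               *: (h (m - 2 * i)%N * g ^+ i))) ->
  (forall m : nat, (m <= n)%N ->
     \sum_(i < m.+1) ((-1) ^+ i * e i * h (m - i)%N)
     = (m == 0%N)%:R - (m == 2%N)%:R * g) ->
  let e' := xprime e g in
  let h' := xprime h g in
  let p' := pmod (q ^ (- k%:Z) * qint q k%:Z) (q ^+ 2) p g in
  let p'' := pmod (q ^ (2 - k%:Z) * qint q (k%:Z - 2)) (q ^ (-2)) p g in
  (forall m : nat, (1 <= m <= n)%N ->
     \sum_(i < m) ((- q) ^+ i *: (e i * p' (m - i)%N))
     = (-1) ^+ m.-1 *: (qnat q m *: e m)) /\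
  (forall m : nat, (1 <= m <= n)%N ->
     \sum_(i < m) (q ^ (- i%:Z) *: (h i * p'' (m - i)%N))
     = qnat q m *: h m) /\
  (forall m : nat, (m <= n)%N ->
     \sum_(i < m.+1) ((-1) ^+ i * e' i * h (m - i)%N) = (m == 0%N)%:R) /\
  (forall m : nat, (m <= n)%N ->
     \sum_(i < m.+1) ((-1) ^+ i * e i * h' (m - i)%N) = (m == 0%N)%:R).
Proof.
move=> q_neq0 k_gt0 _ _ _ p0E e_sum h_sum eh_conv e' h' p' p''.
rewrite {}/e' {}/h' {}/p' {}/p''.
split; [|split; [|split]].
- move=> m /andP[_]; rewrite scalerA.
  apply: (@sum_pmod_corrected _ _ _ (fun m => (-1) ^+ m.-1 * qnat q m) _ _ _ _ _ _ _ _
           p0E _ (@ecoefSS _ q k) (ecoef_cancel q_neq0 k)).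
    by rewrite qnat0 mulr0.
  move=> j /e_sum ->; rewrite scalerA /gcorrection !scaler_sumr; congr (_ + _).
  by apply: eq_bigr => i _; rewrite !scalerA.
- move=> m /andP[_].
  apply: (@sum_pmod_corrected _ _ _ _ _ _ _ _ _ _ _ _
           p0E _ (@hcoefSS _ q k) (fun j => hcoef_cancel q_neq0 j k_gt0)).
    exact: qnat0.
  exact: h_sum.
- apply: (delta_of_recursion eh_conv).
  + by rewrite !big_ord1.
  + by rewrite !big_ord_recr !big_ord0.
  + by move=> j _; apply: xprime_conv_l.
- apply: (delta_of_recursion eh_conv).
  + by rewrite !big_ord1.
  + by rewrite !big_ord_recr !big_ord0.
  + by move=> j _; apply: xprime_conv_r.
Qed.
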